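(* Let $P$ be a finite poset. For every $f\in\mathcal O(P)$ we have $\alpha_2(f)\in\mathcal C(P)$, $\alpha_3(\alpha_2(f))\in\tilde{\mathcal O}(P)$, and $$\rho_{\mathcal P}(f)=\alpha_1\bigl(\alpha_3(\alpha_2(f))\bigr),$$ i.e. $\rho_{\mathcal P}=\alpha_1\circ\alpha_3\circ\alpha_2$ on $\mathcal O(P)$.
   Context: For a finite poset $P$, let $\widehat P=P\cup\{\hat0,\hat1\}$ with $\hat0<x<\hat1$ for all $x\in P$, and write $y\lessdot x$ ($x$ covers $y$) when $y<x$ and no $z$ satisfies $y<z<x$. The order polytope $\mathcal O(P)$ is the set of order-preserving maps $f:P\to[0,1]$; each such $f$ is extended to $\hat f$ on $\widehat P$ by $\hat f(\hat0)=0$, $\hat f(\hat1)=1$. For $x\in P$ the piecewise-linear toggle $\tau_x:\mathcal O(P)\to\mathcal O(P)$ leaves $f(y)$ unchanged for $y\neq x$ and sets $(\tau_xf)(x)=\max\{\hat f(y):y\in\widehat P,\ y\lessdot x\}+\min\{\hat f(y):y\in\widehat P,\ y\gtrdot x\}-f(x)$. Piecewise-linear rowmotion is $\rho_{\mathcal P}=\tau_{x_1}\circ\cdots\circ\tau_{x_p}$ for any linear extension $x_1,\dots,x_p$ of $P$. The chain polytope $\mathcal C(P)$ is the set of maps $g:P\to[0,1]$ with $\sum_{x\in C}g(x)\le 1$ for every chain $C\subseteq P$. $\tilde{\mathcal O}(P)$ is the set of order-reversing maps $P\to[0,1]$. Define: $(\alpha_1 h)(x)=1-h(x)$ for $h\in\tilde{\mathcal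 O}(P)$; $(\alpha_2 f)(x)=\min\{\hat f(x)-\hat f(y): y\in\widehat P,\ y\lessdot x\}$ for $f\in\mathcal O(P)$; and $(\alpha_3 g)(x)=\max\{g(y_1)+\cdots+g(y_k): x=y_1\lessdot y_2\lessdot\cdots\lessdot y_k\lessdot\hat1,\ y_1,\dots,y_k\in P\}$ for $g\in\mathcal C(P)$. *)

From HB Require Import structures.
From mathcomp Require Import all_boot all_order all_algebra.
Set Implicit Arguments. Unset Strict Implicit. Unset Printing Implicit Defensive.
Import Order.TTheory GRing.Theory Num.Theory.
Local Open Scope ring_scope.

Section PL.
Variables (d : Order.disp_t) (P : finPOrderType d) (R : realFieldType).

(* The extended poset \hat P := P ∪ {0^,1^}, encoded as option (option P):
   None = \hat 0, Some None = \hat 1, Some (Some x) = x. *)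
Definition hat := option (option P).
Definition hbot : hat := None.
Definition htop : hat := Some None.
Definition helt (x : P) : hat := Some (Some x).

Definition hlt (a b : hat) : bool :=
  match a, b with
  | None, Some _ => true
  | Some (Some x), Some (Some y) => (x < y)%O
  | Some (Some _), Some None => true
  | _, _ => false
  end.

Definition hcovers (a b : hat) : bool :=
  hlt a b && [forall z : hat, ~~ (hlt a z && hlt z b)].

Definition fhat (f : P -> R) (a : hat) : R :=
  match a with None => 0 | Some None => 1 | Some (Some x) => f x end.

(* max / min of a finite list of reals (only used on nonempty lists;
   the value on the empty list is irrelevant) *)
Definition maxs (s : seq R) : R :=
  if s is x :: t then foldr Num.max x t else 0.
Definition mins (s : seq R) : R :=
  if s is x :: t then foldr Num.min x t else 0.

Definition in_order_polytope (f : P -> R) : Prop :=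
  (forall x, 0 <= f x <= 1) /\ (forall x y : P, (x <= y)%O -> f x <= f y).

Definition is_chain (C : {set P}) : bool :=
  [forall x in C, forall y in C, (x <= y)%O || (y <= x)%O].

Definition in_chain_polytope (g : P -> R) : Prop :=
  (forall x, 0 <= g x <= 1) /\
  (forall C : {set P}, is_chain C -> \sum_(x in C) g x <= 1).

Definition in_rev_order_polytope (h : P -> R) : Prop :=
  (forall x, 0 <= h x <= 1) /\ (forall x y : P, (x <= y)%O -> h y <= h x).

Definition toggle (x : P) (f : P -> R) : P -> R :=
  fun y => if y == x then
      maxs [seq fhat f a | a <- enum {: hat} & hcovers a (helt x)]
    + mins [seq fhat f a | a <- enum {: hat} & hcovers (helt x) a]
    - f x
  else f y.

Definition linear_extension (l : seq P) : Prop :=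
  [/\ uniq l, (forall x, x \in l) &
      (forall x y : P, (x < y)%O -> index x l < index y l)%N].

Definition pl_rowmotion (l : seq P) (f : P -> R) : P -> R :=
  foldr toggle f l.

Definition alpha1 (h : P -> R) : P -> R := fun x => 1 - h x.

Definition alpha2 (f : P -> R) : P -> R := fun x =>
  mins [seq fhat f (helt x) - fhat f a | a <- enum {: hat} & hcovers a (helt x)].

Definition short_seqs : seq (seq P) :=
  flatten [seq [seq tval t | t : n.-tuple P] | n <- iota 0 #|P|.+1].

(* saturated chains x = y_1 ⋖ y_2 ⋖ ... ⋖ y_k ⋖ 1^ are x :: r with r in
   short_seqs (any such chain has k <= #|P| since it is strictly increasing) *)
Definition sat_chain_to_top (x : P) (r : seq P) : bool :=
  path (fun y z => hcovers (helt y) (helt z)) x r && hcovers (helt (last x r)) htop.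

Definition alpha3 (g : P -> R) : P -> R := fun x =>
  maxs [seq \sum_(y <- x :: r) g y | r <- short_seqs & sat_chain_to_top x r].

End PL.

(* alpha2 f x is the smallest jump of \hat f across a cover of x, so along a
   chain the values of alpha2 f are dominated by the telescoping increments of
   f, which gives the chain polytope.  alpha3 g obeys the recursion
   alpha3 g x = g x + max { alpha3 g b : x covered by b } (with 0 at \hat 1).
   When rowmotion toggles x, the elements below x still carry f and those above
   x already carry their final values; rewriting the toggle formula shows that
   1 - rho f satisfies the same recursion for g = alpha2 f, and induction
   downward from \hat 1 identifies the two. *)

From HB Require Import structures.
From mathcomp Require Import all_boot all_order all_algebra.
From mathcomp Require Import lra.
Import Order.TTheory GRing.Theory Num.Theory.
Local Open Scope ring_scope.
Set Implicit Arguments. Unset Strict Implicit. Unset Printing Implicit Defensive.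

Section MaxsMins.
Variable R : realFieldType.
Implicit Types (s : seq R) (z c : R).

Lemma le_maxs s z : z \in s -> z <= maxs s.
Proof.
case: s => [//|x t] /=; elim: t z => [|y t IH] z /=; first by rewrite inE => /eqP ->.
rewrite le_max !inE => /or3P [/eqP ->|/eqP ->|zt]; last 2 first.
- by rewrite lexx.
- by rewrite IH ?orbT // inE zt orbT.
by rewrite IH ?orbT // inE eqxx.
Qed.

Lemma mins_le s z : z \in s -> mins s <= z.
Proof.
case: s => [//|x t] /=; elim: t z => [|y t IH] z /=; first by rewrite inE => /eqP ->.
rewrite ge_min !inE => /or3P [/eqP ->|/eqP ->|zt]; last 2 first.
- by rewrite lexx.
- by rewrite IH ?orbT // inE zt orbT.
by rewrite IH ?orbT // inE eqxx.
Qed.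

Lemma maxs_mem s z : z \in s -> maxs s \in s.
Proof.
case: s => [//|x t] _ /=; elim: t => [|y t IH] /=; first by rewrite inE.
rewrite maxEle; case: ifP => _; last by rewrite !inE eqxx orbT.
by move: IH; rewrite !inE => /orP [->|->]; rewrite ?orbT.
Qed.

Lemma mins_mem s z : z \in s -> mins s \in s.
Proof.
case: s => [//|x t] _ /=; elim: t => [|y t IH] /=; first by rewrite inE.
rewrite minEle; case: ifP => _; first by rewrite !inE eqxx orbT.
by move: IH; rewrite !inE => /orP [->|->]; rewrite ?orbT.
Qed.

Lemma maxs_le s z c : z \in s -> {in s, forall y, y <= c} -> maxs s <= c.
Proof. by move=> zs; apply; apply: maxs_mem zs. Qed.

Lemma le_mins s z c : z \in s -> {in s, forall y, c <= y} -> c <= mins s.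
Proof. by move=> zs; apply; apply: mins_mem zs. Qed.

Lemma mins_subr (T : eqType) (F : T -> R) (s : seq T) a c : a \in s ->
  mins [seq c - F b | b <- s] = c - maxs [seq F b | b <- s].
Proof.
move=> a_s; apply/le_anti/andP; split.
  have /mapP [b bs ->] := maxs_mem (map_f F a_s).
  exact/mins_le/(map_f (fun b => c - F b) bs).
apply: (le_mins (map_f (fun b => c - F b) a_s)) => _ /mapP [b bs ->].
by rewrite lerB // le_maxs // map_f.
Qed.

Lemma maxs_subr (T : eqType) (F : T -> R) (s : seq T) a c : a \in s ->
  maxs [seq c - F b | b <- s] = c - mins [seq F b | b <- s].
Proof.
move=> a_s; apply/le_anti/andP; split; last first.
  have /mapP [b bs ->] := mins_mem (map_f F a_s).
  exact/le_maxs/(map_f (fun b => c - F b) bs).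
apply: (maxs_le (map_f (fun b => c - F b) a_s)) => _ /mapP [b bs ->].
by rewrite lerB // mins_le // map_f.
Qed.

End MaxsMins.

Section FinRelInd.
Variables (T : finType) (lt : rel T).
Hypothesis lt_trans : transitive lt.
Hypothesis lt_irr : irreflexive lt.

Lemma fin_rel_ind_up (Q : T -> Prop) :
  (forall x, (forall y, lt x y -> Q y) -> Q x) -> forall x, Q x.
Proof.
move=> IH x; have [n] := ubnP #|[set y | lt x y]|.
elim: n x => [//|n IHn] x Hn; apply: IH => y xy; apply: IHn.
rewrite -ltnS; apply: leq_trans Hn; apply: proper_card; apply/properP; split.
  by apply/subsetP => z; rewrite !inE; apply: lt_trans.
by exists y; rewrite !inE ?xy ?lt_irr.
Qed.

End FinRelInd.

Lemma fin_rel_ind_down (T : finType) (lt : rel T) :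
    transitive lt -> irreflexive lt ->
  forall Q : T -> Prop, (forall x, (forall y, lt y x -> Q y) -> Q x) -> forall x, Q x.
Proof.
move=> lt_trans lt_irr Q; apply: (@fin_rel_ind_up T (fun x y => lt y x)) => //.
by move=> y x z xy yz; apply: lt_trans yz xy.
Qed.

Section HatPoset.
Variables (d : Order.disp_t) (P : finPOrderType d).
Local Notation hat := (hat P).
Implicit Types (a b c : hat) (x y : P).

Definition hle a b := (a == b) || hlt a b.

Lemma hltxx : irreflexive (@hlt d P).
Proof. by case=> [[x|]|] //=; rewrite ltxx. Qed.

Lemma hlt_trans : transitive (@hlt d P).
Proof. by case=> [[y|]|] [[x|]|] [[z|]|] //=; apply: lt_trans. Qed.

Lemma hltW a b : hlt a b -> hle a b.
Proof. by rewrite /hle => ->; rewrite orbT. Qed.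

Lemma hle_trans a b c : hle a b -> hle b c -> hle a c.
Proof.
case/orP => [/eqP ->//|ab] /orP [/eqP <-|bc]; first exact: hltW.
exact/hltW/(hlt_trans ab bc).
Qed.

Lemma hle_helt x y : hle (helt x) (helt y) = (x <= y)%O.
Proof. by rewrite /hle le_eqVlt. Qed.

Lemma hcovers_lt a b : hcovers a b -> hlt a b.
Proof. by case/andP. Qed.

Lemma hcovers_above a b : hlt a b -> exists2 c, hcovers a c & hle c b.
Proof.
elim/(fin_rel_ind_down hlt_trans hltxx): b => b IH ab.
have [nab|] := boolP [forall z, ~~ (hlt a z && hlt z b)].
  by exists b; rewrite /hle ?eqxx // /hcovers ab.
case/forallPn => z; rewrite negbK => /andP [az zb].
have [c ac cz] := IH z zb az.
by exists c => //; apply: hle_trans cz (hltW zb).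
Qed.

Lemma hcovers_below a b : hlt a b -> exists2 c, hle a c & hcovers c b.
Proof.
elim/(fin_rel_ind_up hlt_trans hltxx): a => a IH ab.
have [nab|] := boolP [forall z, ~~ (hlt a z && hlt z b)].
  by exists a; rewrite /hle ?eqxx // /hcovers ab.
case/forallPn => z; rewrite negbK => /andP [az zb].
have [c zc cb] := IH z az zb.
by exists c => //; apply: hle_trans (hltW az) zc.
Qed.

Lemma chain_sub (C D : {set P}) : is_chain C -> D \subset C -> is_chain D.
Proof.
move=> /forall_inP HC /subsetP DC; apply/forall_inP => x xD.
by apply/forall_inP => y yD; move/forall_inP: (HC x (DC x xD)); apply; apply: DC.
Qed.

Lemma chain_max (C : {set P}) x0 : is_chain C -> x0 \in C ->
  exists2 m, m \in C & {in C, forall x, (x <= m)%O}.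
Proof.
move=> HC; elim/(fin_rel_ind_up (@lt_trans _ P) (@ltxx _ P)): x0 => x IH xC.
have [|] := boolP [exists y in C, (x < y)%O].
  by case/exists_inP => y yC xy; apply: IH xy yC.
rewrite negb_exists_in => /forall_inP Hx; exists x => // y yC.
move/forall_inP: HC => /(_ x xC) /forall_inP /(_ y yC) /orP [xy|//].
by move: (Hx y yC); rewrite lt_neqAle xy andbT negbK => /eqP ->.
Qed.

Lemma hcovers_above_chain (C : {set P}) m : is_chain C ->
    {in C, forall x, (x < m)%O} ->
  exists2 c, hcovers c (helt m) & {in C, forall x, hle (helt x) c}.
Proof.
move=> HC Cm; have [->|[x0 x0C]] := set_0Vmem C.
  by have [c _ cm] := hcovers_below (isT : hlt (hbot P) (helt m)); exists c => // x; rewrite inE.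
have [m' m'C Hm'] := chain_max HC x0C.
have [c m'c cm] := hcovers_below (Cm m' m'C : hlt (helt m') (helt m)).
by exists c => // x xC; apply: hle_trans m'c; rewrite hle_helt Hm'.
Qed.

End HatPoset.

Section Polytopes.
Variables (d : Order.disp_t) (P : finPOrderType d) (R : realFieldType).
Local Notation hat := (hat P).
Local Notation down_covers x := [seq a <- enum {: hat} | hcovers a (helt x)].
Local Notation up_covers x := [seq a <- enum {: hat} | hcovers (helt x) a].
Implicit Types (a b : hat) (x y : P) (f g : P -> R).

Lemma mem_down_covers x a : (a \in down_covers x) = hcovers a (helt x).
Proof. by rewrite mem_filter mem_enum andbT. Qed.

Lemma mem_up_covers x a : (a \in up_covers x) = hcovers (helt x) a.
Proof. by rewrite mem_filter mem_enum andbT. Qed.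

Lemma exists_down_cover x : exists a, a \in down_covers x.
Proof.
have [a _ ax] := hcovers_below (isT : hlt (hbot P) (helt x)).
by exists a; rewrite mem_down_covers.
Qed.

Lemma exists_up_cover x : exists a, a \in up_covers x.
Proof.
have [a xa _] := hcovers_above (isT : hlt (helt x) (htop P)).
by exists a; rewrite mem_up_covers.
Qed.

Lemma alpha2_le_sub f x a : hcovers a (helt x) -> alpha2 f x <= f x - fhat f a.
Proof.
by move=> ax; apply: mins_le; apply: (map_f (fun a => f x - fhat f a)); rewrite mem_down_covers.
Qed.

Lemma mem_short_seqs (r : seq P) : (r \in short_seqs P) = (size r <= #|P|)%N.
Proof.
apply/flatten_mapP/idP => [[n + /mapP [t _ ->]]|rP].
  by rewrite size_tuple mem_iota add0n ltnS.
exists (size r); first by rewrite mem_iota add0n ltnS.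
by apply/mapP; exists (in_tuple r); rewrite ?mem_enum.
Qed.

Lemma sat_chain_to_top_cons x y r : sat_chain_to_top x (y :: r) =
  hcovers (helt x) (helt y) && sat_chain_to_top y r.
Proof. by rewrite /sat_chain_to_top /= andbA. Qed.

Lemma sat_chain_to_top_size x r : sat_chain_to_top x r -> (size (x :: r) <= #|P|)%N.
Proof.
case/andP => xr _; have /lt_sorted_uniq xr_uniq : sorted <%O (x :: r).
  by apply: sub_path xr => y z /hcovers_lt.
by rewrite -(card_uniqP xr_uniq) max_card.
Qed.

Lemma mem_sat_chains x r : sat_chain_to_top x r ->
  r \in [seq r <- short_seqs P | sat_chain_to_top x r].
Proof.
move=> xr; rewrite mem_filter xr mem_short_seqs /=.
exact: leq_trans (sat_chain_to_top_size xr).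
Qed.

Lemma exists_sat_chain_to_top x : exists r, sat_chain_to_top x r.
Proof.
elim/(fin_rel_ind_up (@lt_trans _ P) (@ltxx _ P)): x => x IH.
have [[[y|]|] xc _] := hcovers_above (isT : hlt (helt x) (htop P)).
- by have [r yr] := IH y (hcovers_lt xc); exists (y :: r); rewrite sat_chain_to_top_cons xc.
- by exists [::].
- by have := hcovers_lt xc.
Qed.

Section Alpha3.
Variable g : P -> R.

(* 0 at \hat 1 matches 1 - \hat f (\hat 1); \hat 0 never covers an element. *)
Definition alpha3_hat b : R := if b is Some (Some y) then alpha3 g y else 0.

Lemma le_alpha3 x r : sat_chain_to_top x r -> \sum_(y <- x :: r) g y <= alpha3 g x.
Proof. by move=> /mem_sat_chains xr; apply/le_maxs/map_f. Qed.

Lemma alpha3_attained x :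
  exists2 r, sat_chain_to_top x r & alpha3 g x = \sum_(y <- x :: r) g y.
Proof.
have [r /mem_sat_chains xr] := exists_sat_chain_to_top x.
have /mapP [r'] := maxs_mem (map_f (fun r => \sum_(y <- x :: r) g y) xr).
by rewrite mem_filter => /andP [xr' _]; exists r'.
Qed.

Lemma alpha3_rec x : alpha3 g x = g x + maxs [seq alpha3_hat b | b <- up_covers x].
Proof.
have cover_le b : hcovers (helt x) b -> alpha3_hat b <= maxs [seq alpha3_hat b | b <- up_covers x].
  by move=> xb; apply/le_maxs/map_f; rewrite mem_up_covers.
apply/le_anti/andP; split.
  have [[|y r] xr ->] := alpha3_attained x; rewrite big_cons lerD2l.
    by rewrite big_nil; apply: (cover_le (htop P)); case/andP: xr.
  move: xr; rewrite sat_chain_to_top_cons => /andP [xy yr].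
  exact: le_trans (le_alpha3 yr) (cover_le _ xy).
have [c xc] := exists_up_cover x.
have /mapP [b] := maxs_mem (map_f alpha3_hat xc); rewrite mem_up_covers => xb ->.
case: b xb => [[y|]|] xb /=.
- have [r yr ->] := alpha3_attained y.
  by have := @le_alpha3 x (y :: r); rewrite big_cons; apply; rewrite sat_chain_to_top_cons xb.
- by have := @le_alpha3 x [::]; rewrite big_seq1 addr0; apply; rewrite /sat_chain_to_top /=.
- by have := hcovers_lt xb.
Qed.

Hypothesis g_ge0 : forall x, 0 <= g x.

Lemma alpha3_ge0 x : 0 <= alpha3 g x.
Proof. by have [r _ ->] := alpha3_attained x; apply: sumr_ge0. Qed.

Lemma alpha3_anti x y : (x <= y)%O -> alpha3 g y <= alpha3 g x.
Proof.
elim/(fin_rel_ind_up (@lt_trans _ P) (@ltxx _ P)): x y => x IH y.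
rewrite le_eqVlt => /orP [/eqP -> //|xy].
have [[[z|]|] xz zy] := hcovers_above (xy : hlt (helt x) (helt y)); last 2 first.
- by move: zy; rewrite /hle.
- by have := hcovers_lt xz.
apply: le_trans (IH z (hcovers_lt xz) y _) _; first by rewrite -hle_helt.
rewrite [alpha3 g x]alpha3_rec -[alpha3 g z]add0r lerD //.
by apply: (le_maxs (map_f alpha3_hat (_ : helt z \in _))); rewrite mem_up_covers.
Qed.

End Alpha3.

Section OrderPolytope.
Variable f : P -> R.
Hypothesis f_order : in_order_polytope f.

Lemma fhat_ge0 a : 0 <= fhat f a.
Proof. by case: a => [[x|]|] //=; case: f_order => f01 _; case/andP: (f01 x). Qed.

Lemma fhat_le1 a : fhat f a <= 1.
Proof. by case: a => [[x|]|] //=; case: f_order => f01 _; case/andP: (f01 x). Qed.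

Lemma fhat_homo a b : hle a b -> fhat f a <= fhat f b.
Proof.
case/orP => [/eqP -> //|]; case: a => [[x|]|]; case: b => [[y|]|] //=.
- by move/ltW; case: f_order => _; apply.
- by move=> _; apply: (fhat_le1 (helt x)).
- by move=> _; apply: (fhat_ge0 (helt y)).
Qed.

Lemma alpha2_ge0 x : 0 <= alpha2 f x.
Proof.
have [a ax] := exists_down_cover x.
apply: (le_mins (map_f (fun a => f x - fhat f a) ax)) => y /mapP [b].
rewrite mem_down_covers => bx ->.
by rewrite subr_ge0 (fhat_homo (hltW (hcovers_lt bx))).
Qed.

Lemma alpha2_le x : alpha2 f x <= f x.
Proof.
have [a] := exists_down_cover x; rewrite mem_down_covers => /(alpha2_le_sub f) ga.
by have := fhat_ge0 a; lra.
Qed.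

Lemma sum_alpha2_chain (C : {set P}) b : is_chain C ->
  {in C, forall x, hle (helt x) b} -> \sum_(x in C) alpha2 f x <= fhat f b.
Proof.
have [n] := ubnP #|C|; elim: n C b => [//|n IH] C b Cn HC Cb.
have [->|[x0 x0C]] := set_0Vmem C; first by rewrite big_set0 fhat_ge0.
have [m mC Cm] := chain_max HC x0C.
have HC' := chain_sub HC (subsetDl C [set m]).
have [c cm C'c] : exists2 c, hcovers c (helt m) & {in C :\ m, forall x, hle (helt x) c}.
  apply: hcovers_above_chain HC' _ => x; rewrite in_setD1 => /andP [xm xC].
  by rewrite lt_neqAle xm Cm.
have C'n : (#|C :\ m| < n)%N by move: Cn; rewrite (cardsD1 m C) mC.
have := IH _ _ C'n HC' C'c; have := alpha2_le_sub f cm; have := fhat_homo (Cb m mC).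
by rewrite (big_setD1 m mC) /= => *; lra.
Qed.

Lemma alpha2_chain_polytope : in_chain_polytope (alpha2 f).
Proof.
split=> [x | C HC]; first by rewrite alpha2_ge0 (le_trans (alpha2_le x)) ?(fhat_le1 (helt x)).
by apply: (sum_alpha2_chain (b := htop P)) => // x _; apply: hltW.
Qed.

Lemma alpha3_alpha2_le x : alpha3 (alpha2 f) x <= 1 - f x + alpha2 f x.
Proof.
elim/(fin_rel_ind_up (@lt_trans _ P) (@ltxx _ P)): x => x IH.
rewrite alpha3_rec addrC lerD2r; have [c xc] := exists_up_cover x.
have /mapP [b] := maxs_mem (map_f (alpha3_hat (alpha2 f)) xc).
rewrite mem_up_covers => xb ->; case: b xb => [[y|]|] xb /=.
- have := IH y (hcovers_lt xb); have := alpha2_le_sub f xb; rewrite /= => *; lra.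
- by rewrite subr_ge0 (fhat_le1 (helt x)).
- by have := hcovers_lt xb.
Qed.

Lemma alpha3_alpha2_rev_polytope : in_rev_order_polytope (alpha3 (alpha2 f)).
Proof.
split=> [x|]; last exact: alpha3_anti alpha2_ge0.
rewrite alpha3_ge0 //=; last exact: alpha2_ge0.
by have := alpha3_alpha2_le x; have := alpha2_le x; move=> *; lra.
Qed.

End OrderPolytope.


Lemma foldr_toggle_notin (s : seq P) f y :
  y \notin s -> foldr (@toggle d P R) f s y = f y.
Proof.
elim: s => [//|z s IH]; rewrite in_cons negb_or => /andP [yz ys] /=.
by rewrite /toggle (negbTE yz) IH.
Qed.

Lemma linear_extension_cat l1 l2 x : linear_extension (l1 ++ x :: l2) ->
  (forall y, (y <= x)%O -> y \notin l2) /\ (forall y, (x <= y)%O -> y \notin l1).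
Proof.
case=> uniq_l _ l_lt; move: (uniq_l); rewrite cat_uniq => /and3P [_ l1_l2 /andP [xl2 _]].
have xl1 : x \notin l1 by apply: (hasPn l1_l2); rewrite mem_head.
have ix : index x (l1 ++ x :: l2) = size l1 by rewrite index_cat (negbTE xl1) /= eqxx addn0.
split=> y; last first.
  rewrite le_eqVlt => /orP [/eqP <- //|xy]; apply/negP => yl1; have := l_lt _ _ xy.
  by rewrite ix index_cat yl1 ltnNge ltnW // index_mem.
rewrite le_eqVlt => /orP [/eqP -> //|yx]; apply/negP => yl2.
have yl1 : y \notin l1 by apply: (hasPn l1_l2); rewrite in_cons yl2 orbT.
by have := l_lt _ _ yx; rewrite ix index_cat (negbTE yl1) /= ltnNge leq_addr.
Qed.

Lemma rowmotion_toggle l f x : linear_extension l -> exists h : P -> R,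
  [/\ pl_rowmotion l f x = toggle x h x,
      forall y, (y <= x)%O -> h y = f y &
      forall y, (x < y)%O -> pl_rowmotion l f y = h y].
Proof.
move=> l_ext; have [_ /(_ x) xl _] := l_ext; move: l_ext.
case/splitPr: xl => l1 l2 l_ext.
have [below above] := linear_extension_cat l_ext.
exists (foldr (@toggle d P R) f l2); rewrite /pl_rowmotion foldr_cat; split.
- by rewrite foldr_toggle_notin // above.
- by move=> y /below; apply: foldr_toggle_notin.
- move=> y xy; rewrite foldr_toggle_notin ?above ?(ltW xy) //= /toggle.
  by rewrite gt_eqF.
Qed.

Lemma eq_map_fhat (s : seq hat) f1 f2 : (forall y, helt y \in s -> f1 y = f2 y) ->
  [seq fhat f1 a | a <- s] = [seq fhat f2 a | a <- s].
Proof. by move=> f12; apply/eq_in_map => -[[y|]|] //= /f12. Qed.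

Lemma rowmotion_rec l f x : linear_extension l ->
  1 - pl_rowmotion l f x =
  alpha2 f x + maxs [seq 1 - fhat (pl_rowmotion l f) b | b <- up_covers x].
Proof.
move=> l_ext; have [h [rho_x h_below rho_above]] := rowmotion_toggle f x l_ext.
have [a xa] := exists_down_cover x; have [b xb] := exists_up_cover x.
have down_eq : [seq fhat h a | a <- down_covers x] = [seq fhat f a | a <- down_covers x].
  by apply: eq_map_fhat => y; rewrite mem_down_covers => /hcovers_lt /ltW /h_below.
have up_eq : [seq fhat (pl_rowmotion l f) a | a <- up_covers x] =
             [seq fhat h a | a <- up_covers x].
  by apply: eq_map_fhat => y; rewrite mem_up_covers => /hcovers_lt /rho_above.
rewrite rho_x /toggle eqxx down_eq (h_below x (lexx x)) /alpha2.
by rewrite (mins_subr _ _ xa) (maxs_subr _ _ xb) up_eq /=; lra.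
Qed.

Lemma rowmotion_alpha3 l f x : linear_extension l ->
  pl_rowmotion l f x = 1 - alpha3 (alpha2 f) x.
Proof.
move=> l_ext; suff -> : alpha3 (alpha2 f) x = 1 - pl_rowmotion l f x by rewrite subKr.
elim/(fin_rel_ind_up (@lt_trans _ P) (@ltxx _ P)): x => x IH.
rewrite alpha3_rec (rowmotion_rec f x l_ext); congr (_ + maxs _).
apply/eq_in_map => -[[y|]|]; rewrite mem_up_covers => xb /=.
- exact: IH (hcovers_lt xb).
- by rewrite subrr.
- by have := hcovers_lt xb.
Qed.


End Polytopes.

Theorem theorem2 (d : Order.disp_t) (P : finPOrderType d) (R : realFieldType)
    (f : P -> R) :
  in_order_polytope f ->
  [/\ in_chain_polytope (alpha2 f),
      in_rev_order_polytope (alpha3 (alpha2 f)) &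
      forall l : seq P, linear_extension l ->
        forall x : P, pl_rowmotion l f x = alpha1 (alpha3 (alpha2 f)) x].
Proof.
move=> f_order; split.
- exact: alpha2_chain_polytope.
- exact: alpha3_alpha2_rev_polytope.
- by move=> l l_ext x; rewrite (rowmotion_alpha3 _ _ l_ext).
Qed.
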